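(* The syntactic pomset automaton $A_\Sigma$ is bounded.
   Context: Fix a finite alphabet $\Sigma$. The set $\mathcal{T}$ of sr-expressions is generated by $e, f ::= 0 \mid 1 \mid \mathtt{a}\in\Sigma \mid e+f \mid e\cdot f \mid e\parallel f \mid e^*$. $\mathcal{F}\subseteq\mathcal{T}$ is the smallest set with $1\in\mathcal{F}$; $e+f\in\mathcal{F}$ if $e\in\mathcal{F}$ or $f\in\mathcal{F}$; $e\cdot f, e\parallel f\in\mathcal{F}$ if $e,f\in\mathcal{F}$; and $e^*\in\mathcal{F}$ for all $e$. A pomset automaton (PA) is a tuple $\langle Q,F,\delta,\gamma\rangle$ with states $Q$, accepting states $F\subseteq Q$, $\delta: Q\times\Sigma\to 2^Q$ and $\gamma: Q\times\mathbb{M}(Q)\to 2^Q$ (with $\mathbb{M}(Q)$ the finite multisets over $Q$), such that for each $q$ only finitely many $\phi$ have $\gamma(q,\phi)\neq\emptyset$. The support relation $\preceq$ is the smallest preorder on $Q$ with $q'\preceq q$ whenever $q'\in\delta(q,\mathtt a)$ for some $\mathtt a$, or $q'\in\gamma(q,\phi)$ for some $\phi$, or $q'\in\phi$ for some $\phi$ with $\gamma(q,\phi)\neq\emptyset$. A set $Q'\subseteq Q$ is support-closed if $q\in Q'$ and $q'\preceq q$ imply $q'\in Q'$; the support of $q$ is the smallest support-closed set containing $q$. The PA is bounded if the support of every state is finite. For $e\in\mathcal{T}$ and $T\subseteq\mathcal{T}$, let $e\star T = T$ if $e\in\mathcal{F}$ and $\emptyset$ otherwise. The derivatives $\delta_\Sigma:\mathcal{T}\times\Sigma\to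 2^{\mathcal{T}}$ and $\gamma_\Sigma:\mathcal{T}\times\mathbb{M}(\mathcal{T})\to 2^{\mathcal{T}}$ are defined by: $\delta_\Sigma(0,\mathtt a)=\delta_\Sigma(1,\mathtt a)=\emptyset$; $\delta_\Sigma(\mathtt b,\mathtt a)=\{1 : \mathtt a=\mathtt b\}$; $\delta_\Sigma(e+f,\mathtt a)=\delta_\Sigma(e,\mathtt a)\cup\delta_\Sigma(f,\mathtt a)$; $\delta_\Sigma(e\cdot f,\mathtt a)=\{g\cdot f : g\in\delta_\Sigma(e,\mathtt a)\}\cup e\star\delta_\Sigma(f,\mathtt a)$; $\delta_\Sigma(e\parallel f,\mathtt a)=\emptyset$; $\delta_\Sigma(e^*,\mathtt a)=\{g\cdot e^* : g\in\delta_\Sigma(e,\mathtt a)\}$; and $\gamma_\Sigma(0,\phi)=\gamma_\Sigma(1,\phi)=\gamma_\Sigma(\mathtt b,\phi)=\emptyset$; $\gamma_\Sigma(e+f,\phi)=\gamma_\Sigma(e,\phi)\cup\gamma_\Sigma(f,\phi)$; $\gamma_\Sigma(e\cdot f,\phi)=\{g\cdot f: g\in\gamma_\Sigma(e,\phi)\}\cup e\star\gamma_\Sigma(f,\phi)$; $\gamma_\Sigma(e\parallel f,\phi)=\{1 : \phi=\{\!\{e,f\}\!\}\}$; $\gamma_\Sigma(e^*,\phi)=\{g\cdot e^* : g\in\gamma_\Sigma(e,\phi)\}$. The syntactic PA is $A_\Sigma=\langle\mathcal{T},\mathcal{F},\delta_\Sigma,\gamma_\Sigma\rangle$. *)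

(* Sets 2^X are predicates X -> Prop; finite multisets M(Q)
   are represented by lists modulo permutation. *)
From Stdlib Require Import List Permutation Relations.
Import ListNotations.
Set Implicit Arguments.

Record PA (Sigma : Type) := mkPA {
  pa_Q : Type;
  pa_F : pa_Q -> Prop;
  pa_delta : pa_Q -> Sigma -> pa_Q -> Prop;
  pa_gamma : pa_Q -> list pa_Q -> pa_Q -> Prop
}.

(* Well-formedness: gamma is a function of the multiset phi (invariant under
   permutation of the list), and for each q only finitely many multisets phi
   have gamma q phi nonempty. *)
Definition PA_wf (Sigma : Type) (A : PA Sigma) : Prop :=
  (forall q phi psi q', Permutation phi psi ->
      pa_gamma A q phi q' -> pa_gamma A q psi q') /\
  (forall q, exists L : list (list (pa_Q A)),
      forall phi, (exists q', pa_gamma A q phi q') ->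
        exists psi, In psi L /\ Permutation phi psi).

(* one step of the support relation: support_step A q' q  means  q' "below" q *)
Inductive support_step (Sigma : Type) (A : PA Sigma) : pa_Q A -> pa_Q A -> Prop :=
| ss_delta : forall q a q', pa_delta A q a q' -> support_step A q' q
| ss_gamma : forall q phi q', pa_gamma A q phi q' -> support_step A q' q
| ss_child : forall q phi q' r, pa_gamma A q phi r -> In q' phi -> support_step A q' q.

Definition supports (Sigma : Type) (A : PA Sigma) : relation (pa_Q A) :=
  clos_refl_trans (pa_Q A) (support_step A).

Definition support_closed (Sigma : Type) (A : PA Sigma) (S : pa_Q A -> Prop) : Prop :=
  forall q q', S q -> supports A q' q -> S q'.

Definition support (Sigma : Type) (A : PA Sigma) (q : pa_Q A) : pa_Q A -> Prop :=
  fun x => forall S, support_closed A S -> S q -> S x.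

Definition finite_set (X : Type) (S : X -> Prop) : Prop :=
  exists l : list X, forall x, S x -> In x l.

Definition bounded (Sigma : Type) (A : PA Sigma) : Prop :=
  forall q, finite_set (support A q).

Inductive term (Sigma : Type) : Type :=
| t0 : term Sigma
| t1 : term Sigma
| tlet : Sigma -> term Sigma
| tplus : term Sigma -> term Sigma -> term Sigma
| tseq : term Sigma -> term Sigma -> term Sigma
| tpar : term Sigma -> term Sigma -> term Sigma
| tstar : term Sigma -> term Sigma.
Arguments t0 {Sigma}.
Arguments t1 {Sigma}.

(* the set F of expressions accepting the empty pomset *)
Inductive Fin (Sigma : Type) : term Sigma -> Prop :=
| F_one : Fin t1
| F_plusl : forall e f, Fin e -> Fin (tplus e f)
| F_plusr : forall e f, Fin f -> Fin (tplus e f)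
| F_seq : forall e f, Fin e -> Fin f -> Fin (tseq e f)
| F_par : forall e f, Fin e -> Fin f -> Fin (tpar e f)
| F_star : forall e, Fin (tstar e).

Definition fstar (Sigma : Type) (e : term Sigma) (T : term Sigma -> Prop)
  : term Sigma -> Prop := fun g => Fin e /\ T g.

Definition seqr (Sigma : Type) (T : term Sigma -> Prop) (f : term Sigma)
  : term Sigma -> Prop := fun h => exists g, T g /\ h = tseq g f.

Fixpoint delta_S (Sigma : Type) (e : term Sigma) (a : Sigma) : term Sigma -> Prop :=
  match e with
  | t0 => fun _ => False
  | t1 => fun _ => False
  | tlet b => fun h => a = b /\ h = t1
  | tplus e f => fun h => delta_S e a h \/ delta_S f a h
  | tseq e f => fun h => seqr (delta_S e a) f h \/ fstar e (delta_S f a) h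
  | tpar _ _ => fun _ => False
  | tstar e' => seqr (delta_S e' a) (tstar e')
  end.

Fixpoint gamma_S (Sigma : Type) (e : term Sigma) (phi : list (term Sigma))
  : term Sigma -> Prop :=
  match e with
  | t0 => fun _ => False
  | t1 => fun _ => False
  | tlet _ => fun _ => False
  | tplus e f => fun h => gamma_S e phi h \/ gamma_S f phi h
  | tseq e f => fun h => seqr (gamma_S e phi) f h \/ fstar e (gamma_S f phi) h
  | tpar e f => fun h => Permutation phi [e; f] /\ h = t1
  | tstar e' => seqr (gamma_S e' phi) (tstar e')
  end.

Definition A_syn (Sigma : Type) : PA Sigma :=
  @mkPA Sigma (term Sigma) (@Fin Sigma) (@delta_S Sigma) (@gamma_S Sigma).

(* Every state reachable in the support of an sr-expression [e] lies in an
   explicit finite list [closure e], built by structural recursion: the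
   derivatives of [e . f] are [g . f] for derivatives [g] of [e], or
   derivatives of [f]; those of [e*] are [g . e*]; and [e || f] only reaches
   [1], [e] and [f].  A single support step from [q] lands in [closure q],
   and [closure] is transitive, so [closure e] is closed under the support
   preorder. *)
From Stdlib Require Import List Permutation.
Import ListNotations.
Set Implicit Arguments.

Section Support.
Variables (Sigma : Type) (A : PA Sigma).

Lemma support_closed_of_step_closed (S : pa_Q A -> Prop) :
  (forall q q', S q -> support_step A q' q -> S q') -> support_closed A S.
Proof.
  intros Hstep q q' Hq Hsupp.
  induction Hsupp as [x y Hxy | x | x y z _ IHyz _ IHxy]; eauto.
Qed.

Lemma bounded_of_step_closed_lists :
  (forall q, exists l, In q l /\
     forall x y, In x l -> support_step A y x -> In y l) ->
  bounded A.
Proof.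
  intros Hcl q. destruct (Hcl q) as [l [Hq Hl]].
  exists l. intros x Hx. apply Hx; [|exact Hq].
  apply support_closed_of_step_closed. exact Hl.
Qed.

End Support.

Section Syntactic.
Variable Sigma : Type.
Notation term := (term Sigma).
Notation step := (@support_step Sigma (A_syn Sigma)).

Lemma step_t0_inv (q : term) : ~ step q t0.
Proof. intro H; inversion H; subst; simpl in *; tauto. Qed.

Lemma step_t1_inv (q : term) : ~ step q t1.
Proof. intro H; inversion H; subst; simpl in *; tauto. Qed.

Lemma step_tlet_inv (b : Sigma) (q : term) : step q (tlet b) -> q = t1.
Proof. intro H; inversion H; subst; simpl in *; tauto. Qed.

Lemma step_tplus_inv (e f q : term) : step q (tplus e f) -> step q e \/ step q f.
Proof.
  intro H; inversion H as [? a ? Hd | ? phi ? Hg | ? phi ? r Hg Hin]; subst;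
    simpl in *.
  - destruct Hd; [left | right]; eapply ss_delta; eauto.
  - destruct Hg; [left | right]; eapply ss_gamma; eauto.
  - destruct Hg; [left | right]; eapply ss_child; eauto.
Qed.

Lemma step_tseq_inv (e f q : term) : step q (tseq e f) ->
  step q e \/ (exists e', step e' e /\ q = tseq e' f) \/ step q f.
Proof.
  intro H; inversion H as [? a ? Hd | ? phi ? Hg | ? phi ? r Hg Hin]; subst;
    simpl in *.
  - destruct Hd as [[e' [He' ->]] | [_ Hf]].
    + right; left; exists e'; split; [eapply ss_delta; eauto | reflexivity].
    + right; right; eapply ss_delta; eauto.
  - destruct Hg as [[e' [He' ->]] | [_ Hf]].
    + right; left; exists e'; split; [eapply ss_gamma; eauto | reflexivity].
    + right; right; eapply ss_gamma; eauto.
  - destruct Hg as [[e' [He' ->]] | [_ Hf]].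
    + left; eapply ss_child; eauto.
    + right; right; eapply ss_child; eauto.
Qed.

Lemma step_tpar_inv (e f q : term) : step q (tpar e f) -> q = t1 \/ q = e \/ q = f.
Proof.
  intro H; inversion H as [? a ? Hd | ? phi ? Hg | ? phi ? r Hg Hin]; subst;
    simpl in *.
  - contradiction.
  - destruct Hg as [_ ->]; auto.
  - destruct Hg as [Hperm _].
    apply (Permutation_in _ Hperm) in Hin; simpl in Hin; intuition.
Qed.

Lemma step_tstar_inv (e q : term) : step q (tstar e) ->
  step q e \/ (exists e', step e' e /\ q = tseq e' (tstar e)).
Proof.
  intro H; inversion H as [? a ? Hd | ? phi ? Hg | ? phi ? r Hg Hin]; subst;
    simpl in *.
  - destruct Hd as [e' [He' ->]].
    right; exists e'; split; [eapply ss_delta; eauto | reflexivity].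
  - destruct Hg as [e' [He' ->]].
    right; exists e'; split; [eapply ss_gamma; eauto | reflexivity].
  - destruct Hg as [e' [He' ->]].
    left; eapply ss_child; eauto.
Qed.

Fixpoint closure (e : term) : list term :=
  match e with
  | t0 => [t0]
  | t1 => [t1]
  | tlet a => [tlet a; t1]
  | tplus e f => tplus e f :: closure e ++ closure f
  | tseq e f => map (fun g => tseq g f) (closure e) ++ closure e ++ closure f
  | tpar e f => tpar e f :: t1 :: closure e ++ closure f
  | tstar e => tstar e :: map (fun g => tseq g (tstar e)) (closure e) ++ closure e
  end.

Lemma closure_self (e : term) : In e (closure e).
Proof.
  induction e as [| | b | e _ f _ | e IHe f _ | e _ f _ | e _]; simpl; auto.
  apply in_or_app; left; apply (in_map (fun g => tseq g f)), IHe.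
Qed.

Lemma closure_trans (e q : term) : In q (closure e) -> incl (closure q) (closure e).
Proof.
  revert q.
  induction e as [| | b | e IHe f IHf | e IHe f IHf | e IHe f IHf | e IHe];
    simpl; intros q Hq.
  - destruct Hq as [<- | []]; apply incl_refl.
  - destruct Hq as [<- | []]; apply incl_refl.
  - destruct Hq as [<- | [<- | []]]; [apply incl_refl |].
    intros x [<- | []]; simpl; auto.
  - destruct Hq as [<- | Hq]; [apply incl_refl |].
    apply incl_tl. apply in_app_or in Hq as [Hq | Hq].
    + apply incl_appl, IHe, Hq.
    + apply incl_appr, IHf, Hq.
  - apply in_app_or in Hq as [Hq | Hq].
    + apply in_map_iff in Hq as [g [<- Hg]]; simpl.
      apply incl_app; [| apply incl_app].
      * apply incl_appl, incl_map, IHe, Hg.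
      * apply incl_appr, incl_appl, IHe, Hg.
      * apply incl_appr, incl_appr, incl_refl.
    + apply incl_appr. apply in_app_or in Hq as [Hq | Hq].
      * apply incl_appl, IHe, Hq.
      * apply incl_appr, IHf, Hq.
  - destruct Hq as [<- | [<- | Hq]]; [apply incl_refl | |].
    + intros x [<- | []]; simpl; auto.
    + do 2 apply incl_tl. apply in_app_or in Hq as [Hq | Hq].
      * apply incl_appl, IHe, Hq.
      * apply incl_appr, IHf, Hq.
  - destruct Hq as [<- | Hq]; [apply incl_refl |].
    apply in_app_or in Hq as [Hq | Hq].
    + apply in_map_iff in Hq as [g [<- Hg]]; simpl.
      apply incl_app; [| apply incl_app].
      * apply incl_tl, incl_appl, incl_map, IHe, Hg.
      * apply incl_tl, incl_appr, IHe, Hg.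
      * apply incl_refl.
    + apply incl_tl, incl_appr, IHe, Hq.
Qed.

Lemma step_in_closure (q q' : term) : step q' q -> In q' (closure q).
Proof.
  revert q'.
  induction q as [| | b | e IHe f IHf | e IHe f IHf | e IHe f IHf | e IHe];
    intros q' H; simpl.
  - now apply step_t0_inv in H.
  - now apply step_t1_inv in H.
  - apply step_tlet_inv in H; subst; auto.
  - right; apply in_or_app.
    destruct (step_tplus_inv H); auto.
  - destruct (step_tseq_inv H) as [Hs | [[e' [Hs ->]] | Hs]].
    + apply in_or_app; right; apply in_or_app; left; auto.
    + apply in_or_app; left; apply (in_map (fun g => tseq g f)); auto.
    + apply in_or_app; right; apply in_or_app; right; auto.
  - destruct (step_tpar_inv H) as [-> | [-> | ->]]; auto;
      right; right; apply in_or_app; auto using closure_self.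
  - right; apply in_or_app.
    destruct (step_tstar_inv H) as [Hs | [e' [Hs ->]]]; auto.
    left; apply (in_map (fun g => tseq g (tstar e))); auto.
Qed.

Lemma closure_step_closed (e q q' : term) :
  In q (closure e) -> step q' q -> In q' (closure e).
Proof.
  intros Hq Hs. exact (closure_trans e q Hq q' (step_in_closure Hs)).
Qed.

End Syntactic.

Theorem lemma7p15 (Sigma : Type) (HSigma : exists l : list Sigma, forall a, In a l) :
  bounded (A_syn Sigma).
Proof.
  apply bounded_of_step_closed_lists.
  intros e. exists (closure e). split.
  - apply closure_self.
  - intros q q'. apply closure_step_closed.
Qed.
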